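(* Let $\rho\in\mathrm{Rect}^\ast(n)$ with $\rho\notin\mathcal B_n$ (a genuine rear ear), and let $\sigma\in\mathrm{Rect}^\ast(n)$ with $d_{\mathrm{sup}}(\rho,\sigma)<\infty$. Then every support corridor between $\rho$ and $\sigma$ starts (at its end in $A(\rho)$) at a vertex whose local simplex dimension in $G_n$ is at least $3$.
   Context: The partition graph $G_n$ has as vertices the integer partitions of $n$; two partitions are adjacent if one is obtained from the other by a single elementary unit transfer followed by reordering: decrease one part by $1$ and either increase a different part by $1$ or create a new part equal to $1$, then delete a part that became $0$ and sort in nonincreasing order (the result being different from the original). $\mathrm{Rect}^\ast(n)=\{(a^b):ab=n,\ a,b\ge2\}$, where $(a^b)$ has $b$ parts equal to $a$. The boundary framework is $\mathcal B_n=\mathcal M_n\cup\mathcal L_n\cup\mathcal R_n$ with $\mathcal M_n=\{(n-k,1^k):0\le k\le n-1\}$, $\mathcal L_n=\{(n-k,k):1\le k\le\lfloor n/2\rfloor\}$, and $\mathcal R_n$ the set of conjugates of elements of $\mathcal L_n$. For $\rho=(a^b)\in\mathrm{Rect}^\ast(n)$ the attachment pair is $A(\rho)=\{(a+1,a^{\,b-2},a-1),\ (a^{\,b-1},a-1,1)\}$ (with $(a+1,a-1)$ as the first element when $b=2$). The support distance $d_{\mathrm{sup}}(\rho,\sigma)$ is the minimum of the graph distances in $G_n\setminus\mathrm{Rect}^\ast(n)$ between a vertex of $A(\rho)$ and a vertex of $A(\sigma)$ ($\infty$ if no such path exists). A support corridor between $\rho$ and $\sigma$ is a shortest path in $G_n\setminus\mathrm{Rect}^\ast(n)$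 joining some vertex of $A(\rho)$ to some vertex of $A(\sigma)$ (of length $d_{\mathrm{sup}}(\rho,\sigma)$). The local simplex dimension of a vertex $v$ is $m-1$ where $m$ is the largest size of a clique of $G_n$ containing $v$. *)

(* Integer partitions are represented as seq nat in
   nonincreasing order with positive parts. *)
From mathcomp Require Import all_boot.
Set Implicit Arguments. Unset Strict Implicit. Unset Printing Implicit Defensive.

Definition is_partition (n : nat) (p : seq nat) : bool :=
  [&& sorted geq p, all (fun x => 0 < x) p & sumn p == n].

Definition normalize (s : seq nat) : seq nat := sort geq (filter (fun x => 0 < x) s).

(* elementary unit transfer: decrease part i by 1, then increase the part at
   position j by 1 (j = size p creates a new part equal to 1), then normalize *)
Definition transfer (p : seq nat) (i j : nat) : seq nat :=
  normalize (incr_nth (set_nth 0 p i (nth 0 p i).-1) j).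

Definition step (n : nat) (p q : seq nat) : bool :=
  is_partition n p && (q != p) &&
  has (fun i => has (fun j => (i != j) && (q == transfer p i j))
                    (iota 0 (size p).+1))
      (iota 0 (size p)).

Definition adj (n : nat) (p q : seq nat) : bool := step n p q || step n q p.

Definition isRect (n : nat) (p : seq nat) : bool :=
  has (fun a => has (fun b => [&& 1 < a, 1 < b, a * b == n & p == nseq b a])
                    (iota 0 n.+1))
      (iota 0 n.+1).

Definition conjp (p : seq nat) : seq nat :=
  mkseq (fun i => count (fun x => i < x) p) (head 0 p).

Definition inM (n : nat) (p : seq nat) : Prop :=
  exists k, k <= n - 1 /\ p = (n - k) :: nseq k 1.
Definition inL (n : nat) (p : seq nat) : Prop :=
  exists k, 1 <= k <= n./2 /\ p = [:: n - k; k].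
Definition inR (n : nat) (p : seq nat) : Prop :=
  exists q, inL n q /\ p = conjp q.
Definition inB (n : nat) (p : seq nat) : Prop := inM n p \/ inL n p \/ inR n p.

Definition attach (rho : seq nat) : seq (seq nat) :=
  let a := head 0 rho in let b := size rho in
  [:: (a.+1 :: nseq (b - 2) a) ++ [:: a.-1];
      nseq (b - 1) a ++ [:: a.-1; 1]].

Definition walk_avoid (n : nat) (x : seq nat) (s : seq (seq nat)) : bool :=
  [&& is_partition n x, path (adj n) x s & all (fun v => ~~ isRect n v) (x :: s)].

(* x :: s is a walk in G_n \ Rect*(n) from a vertex of A(rho) to a vertex of A(sigma);
   its length is size s *)
Definition conn (n : nat) (rho sigma : seq nat) (x : seq nat) (s : seq (seq nat)) : bool :=
  [&& x \in attach rho, last x s \in attach sigma & walk_avoid n x s].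

Definition dsup_finite (n : nat) (rho sigma : seq nat) : Prop :=
  exists x s, conn n rho sigma x s.

Definition support_corridor (n : nat) (rho sigma : seq nat) (x : seq nat)
    (s : seq (seq nat)) : Prop :=
  conn n rho sigma x s /\ forall x' s', conn n rho sigma x' s' -> size s <= size s'.

Definition is_clique (n : nat) (K : seq (seq nat)) : Prop :=
  uniq K /\ (forall p, p \in K -> is_partition n p) /\
  (forall p q, p \in K -> q \in K -> p != q -> adj n p q).

(* the local simplex dimension of v (= max clique size containing v, minus 1)
   is at least d *)
Definition local_simplex_dim_ge (n : nat) (v : seq nat) (d : nat) : Prop :=
  exists K, is_clique n K /\ v \in K /\ d <= (size K).-1.

From mathcomp Require Import all_boot zify.
Set Implicit Arguments. Unset Strict Implicit. Unset Printing Implicit Defensive.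

(* Only the end x of the corridor in A(rho) matters.  Since (2^b) lies in R_n and (a^2) in
   L_n, a rear ear rho = (a^b) has a, b >= 3.  Each vertex of A(rho) arises by adding a unit
   to a partition mu of n - 1 with four addable cells, and adding the unit at two different
   addable cells gives partitions one transfer apart, so these four form a 4-clique. *)

Lemma geq_trans : transitive geq.
Proof. by move=> y x z /= le_yx le_zy; apply: leq_trans le_zy le_yx. Qed.

Lemma normalize_id s : all (fun x => 0 < x) s -> sorted geq s -> normalize s = s.
Proof.
move=> /all_filterP pos_s sorted_s.
by rewrite /normalize pos_s sorted_sort //; apply: geq_trans.
Qed.

Lemma normalize_rcons0 s : normalize (rcons s 0) = normalize s.
Proof. by rewrite /normalize filter_rcons. Qed.

Lemma set_nth_incr_nth (mu : seq nat) i : i <= size mu ->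
  set_nth 0 (incr_nth mu i) i (nth 0 mu i) = if i < size mu then mu else rcons mu 0.
Proof.
elim: mu i => [|x mu IH] [|i] //= le_i.
by rewrite IH // ltnS; case: ifP.
Qed.

Lemma incr_nth_rcons0 (mu : seq nat) j : j < size mu ->
  incr_nth (rcons mu 0) j = rcons (incr_nth mu j) 0.
Proof. by elim: mu j => [|x mu IH] [|j] //= lt_j; rewrite IH. Qed.

Lemma incr_nth_nseq_cat k x t i : incr_nth (nseq k x ++ t) (i + k) = nseq k x ++ incr_nth t i.
Proof. by elim: k => [|k IH]; rewrite ?addn0 // addnS /= IH. Qed.

Lemma incr_nth_size (s : seq nat) : incr_nth s (size s) = rcons s 1.
Proof. by elim: s => //= x s ->. Qed.

Lemma sumn_incr_nth (mu : seq nat) j : sumn (incr_nth mu j) = (sumn mu).+1.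
Proof.
elim: mu j => [|x mu IH] [|j] //=; last by rewrite IH addnS.
by rewrite -cat_nseq sumn_cat sumn_nseq.
Qed.

Section AddableCells.

Variable mu : seq nat.

Definition addable (j : nat) : bool := (j <= size mu) && sorted geq (incr_nth mu j).

Hypothesis mu_pos : all (fun x => 0 < x) mu.

Lemma all_pos_incr_nth j : j <= size mu -> all (fun x => 0 < x) (incr_nth mu j).
Proof.
elim: mu mu_pos j => [|x s IH] /=; first by move=> _ [|j].
by case/andP=> pos_x pos_s [|j] //= le_j; rewrite pos_x IH.
Qed.

Lemma is_partition_incr_nth n j : (sumn mu).+1 = n -> addable j ->
  is_partition n (incr_nth mu j).
Proof.
move=> sum_mu /andP[le_j sorted_j].
by rewrite /is_partition sorted_j all_pos_incr_nth // sumn_incr_nth sum_mu /=.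
Qed.

Lemma transfer_incr_nth i j : i <= size mu -> i != j -> addable j ->
  transfer (incr_nth mu i) i j = incr_nth mu j.
Proof.
move=> le_i neq_ij /andP[le_j sorted_j].
have pos_j := all_pos_incr_nth le_j.
rewrite /transfer nth_incr_nth eqxx set_nth_incr_nth //; case: ifP => lt_i.
  by rewrite normalize_id.
by rewrite incr_nth_rcons0 ?normalize_rcons0 ?normalize_id //; lia.
Qed.

Lemma step_incr_nth n i j : (sumn mu).+1 = n -> addable i -> addable j -> i != j ->
  step n (incr_nth mu i) (incr_nth mu j).
Proof.
move=> sum_mu add_i add_j neq_ij.
have le_i : i <= size mu by case/andP: add_i.
rewrite /step is_partition_incr_nth // (inj_eq (@incr_nth_inj mu)) eq_sym neq_ij !andTb.
apply/hasP; exists i; first by rewrite mem_iota size_incr_nth; case: ifP; lia.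
apply/hasP; exists j; last by rewrite neq_ij transfer_incr_nth ?eqxx.
by case/andP: add_j; rewrite mem_iota size_incr_nth; case: ifP; lia.
Qed.

Lemma is_clique_incr_nth n js : (sumn mu).+1 = n -> uniq js -> all addable js ->
  is_clique n (map (incr_nth mu) js).
Proof.
move=> sum_mu uniq_js /allP add_js.
split; first by rewrite map_inj_uniq //; apply: incr_nth_inj.
split=> [_ /mapP[j /add_js add_j ->]|]; first exact: is_partition_incr_nth.
move=> _ _ /mapP[i /add_js add_i ->] /mapP[j /add_js add_j ->] neq.
by rewrite /adj step_incr_nth //; apply: contraNneq neq => ->.
Qed.

Lemma local_simplex_dim_incr_nth n js j : (sumn mu).+1 = n -> uniq js -> all addable js ->
  j \in js -> local_simplex_dim_ge n (incr_nth mu j) (size js).-1.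
Proof.
move=> sum_mu uniq_js add_js js_j; exists (map (incr_nth mu) js).
by rewrite map_f // size_map; split=> //; apply: is_clique_incr_nth.
Qed.

End AddableCells.

Lemma conjp_nseq m k : 0 < m -> conjp (nseq m k) = nseq k m.
Proof.
case: m => // m _; apply: (eq_from_nth (x0 := 0)); rewrite size_mkseq ?size_nseq // => i lt_i.
by rewrite nth_mkseq // nth_nseq lt_i count_nseq /= lt_i mul1n.
Qed.

Lemma isRect_nseq n rho : isRect n rho ->
  exists a b, [/\ 1 < a, 1 < b, a * b = n & rho = nseq b a].
Proof. by case/hasP=> a _ /hasP[b _ /and4P[gt1_a gt1_b /eqP ab_n /eqP ->]]; exists a, b. Qed.

Lemma inL_pair a : 0 < a -> inL (a * 2) [:: a; a].
Proof. by move=> gt0_a; exists a; split; [lia | congr [:: _; _]; lia]. Qed.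

Lemma inR_nseq2 b : 0 < b -> inR (2 * b) (nseq b 2).
Proof.
by move=> gt0_b; exists (nseq 2 b); rewrite conjp_nseq // mulnC; split=> //; apply: inL_pair.
Qed.

Lemma rect_notin_boundary a b : 1 < a -> 1 < b -> ~ inB (a * b) (nseq b a) -> 2 < a /\ 2 < b.
Proof.
move=> gt1_a gt1_b notB.
split; rewrite ltn_neqAle ?gt1_a ?gt1_b andbT; apply/eqP => eq2; apply: notB; subst.
  by right; right; apply: inR_nseq2; lia.
by right; left; apply: inL_pair; lia.
Qed.

Lemma path_geq_nseq_cat x y k t : y <= x -> path geq y t -> path geq x (nseq k y ++ t).
Proof.
elim: k x => [|k IH] x le_yx path_t /=; last by rewrite le_yx IH.
by case: t path_t => //= z t /andP[le_zy ->]; rewrite andbT (leq_trans le_zy le_yx).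
Qed.

Lemma attach_nseq a b : 0 < b ->
  attach (nseq b a) = [:: (a.+1 :: nseq (b - 2) a) ++ [:: a.-1]; nseq (b - 1) a ++ [:: a.-1; 1]].
Proof. by case: b => // b _; rewrite /attach /= size_nseq. Qed.

Lemma attach_head_local_simplex_dim a b : 2 < a -> 2 < b ->
  local_simplex_dim_ge (a * b) ((a.+1 :: nseq (b - 2) a) ++ [:: a.-1]) 3.
Proof.
case: a b => [|[|[|c]]] [|[|[|d]]] // _ _; rewrite !subSS subn0 /=.
set mu := c.+4 :: nseq d.+1 c.+3 ++ [:: c.+1].
have -> : c.+4 :: nseq d.+1 c.+3 ++ [:: c.+2] = incr_nth mu d.+2.
  by rewrite /mu /= (incr_nth_nseq_cat _ _ _ 0).
apply: (local_simplex_dim_incr_nth _ (js := [:: 0; 1; d.+2; size mu])).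
- by rewrite /mu /= all_cat all_nseq /=; lia.
- by rewrite /mu /= sumn_cat sumn_nseq /=; nia.
- by rewrite /mu /= size_cat size_nseq /= !inE; lia.
- rewrite /= /addable incr_nth_size /mu /= (incr_nth_nseq_cat _ _ _ 0).
  by rewrite rcons_cat size_cat size_nseq /= !path_geq_nseq_cat //=; lia.
- by rewrite !inE eqxx !orbT.
Qed.

Lemma attach_tail_local_simplex_dim a b : 2 < a -> 2 < b ->
  local_simplex_dim_ge (a * b) (nseq (b - 1) a ++ [:: a.-1; 1]) 3.
Proof.
case: a b => [|[|[|c]]] [|[|[|d]]] // _ _; rewrite subn1 /=.
set mu := nseq d.+1 c.+3 ++ [:: c.+2; c.+2; 1].
have -> : c.+3 :: c.+3 :: nseq d c.+3 ++ [:: c.+2; 1] = incr_nth mu d.+1.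
  by rewrite /mu (incr_nth_nseq_cat _ _ _ 0) /=; elim: d {mu} => //= d ->.
apply: (local_simplex_dim_incr_nth _ (js := [:: 0; d.+1; d.+3; size mu])).
- by rewrite /mu /= all_cat all_nseq /=; lia.
- by rewrite /mu /= sumn_cat sumn_nseq /=; nia.
- by rewrite /mu /= size_cat size_nseq /= !inE; lia.
- rewrite /= /addable incr_nth_size /mu.
  rewrite (incr_nth_nseq_cat _ _ _ 0) (incr_nth_nseq_cat _ _ _ 2) rcons_cat size_cat size_nseq /=.
  by rewrite size_cat size_nseq !path_geq_nseq_cat //=; lia.
- by rewrite !inE eqxx !orbT.
Qed.

Lemma attach_local_simplex_dim a b x : 2 < a -> 2 < b ->
  x \in attach (nseq b a) -> local_simplex_dim_ge (a * b) x 3.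
Proof.
move=> gt2_a gt2_b; rewrite attach_nseq ?(ltn_trans _ gt2_b) // !inE.
case/orP=> /eqP ->; first exact: attach_head_local_simplex_dim.
exact: attach_tail_local_simplex_dim.
Qed.

Theorem corollary4p8 (n : nat) (rho sigma : seq nat) :
  isRect n rho -> ~ inB n rho ->
  isRect n sigma -> dsup_finite n rho sigma ->
  forall (x : seq nat) (s : seq (seq nat)),
    support_corridor n rho sigma x s -> local_simplex_dim_ge n x 3.
Proof.
move=> /isRect_nseq[a [b [gt1_a gt1_b <- ->]]] notB _ _ x s [/and3P[attach_x _ _] _].
have [gt2_a gt2_b] := rect_notin_boundary gt1_a gt1_b notB.
exact: attach_local_simplex_dim gt2_a gt2_b attach_x.
Qed.
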